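(* Let $(X,d)$ be an arbitrary metric space and let $p\in X$. Then the function $$\tau_p(x,y)=\log\Big(1+2\frac{d(x,y)}{\sqrt{d(x,p)d(y,p)}}\Big)$$ is a metric on $X\setminus\{p\}$. *)

From Stdlib Require Import Reals.
Open Scope R_scope.

Definition is_metric {T : Type} (d : T -> T -> R) : Prop :=
  (forall x y, 0 <= d x y) /\
  (forall x y, d x y = 0 <-> x = y) /\
  (forall x y, d x y = d y x) /\
  (forall x y z, d x z <= d x y + d y z).

Definition punctured (X : Type) (p : X) : Type := { x : X | x <> p }.

Definition tau {X : Type} (d : X -> X -> R) (p : X)
  (x y : punctured X p) : R :=
  ln (1 + 2 * (d (proj1_sig x) (proj1_sig y)
               / sqrt (d (proj1_sig x) p * d (proj1_sig y) p))).

(* Write a = d(x,p), b = d(y,p), c = d(z,p), u = d(x,y), v = d(y,z), w = d(x,z).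
   Symmetry and definiteness of tau_p are inherited from d, and the triangle
   inequality is the multiplicative inequality
     1 + 2 w / sqrt(a c) <= (1 + 2 u / sqrt(a b)) (1 + 2 v / sqrt(b c)).
   Clearing denominators (with A = sqrt a etc.) it reads
     w B^2 <= u B C + v A B + 2 u v.
   Since B^2 <= C^2 + v we have B C >= min(B, C)^2 >= B^2 - v, and likewise
   A B >= B^2 - u, so the right-hand side is at least (u + v) B^2 >= w B^2. *)

From Stdlib Require Import Reals Lra Psatz ProofIrrelevance.
Open Scope R_scope.

Lemma ln_le x y : 0 < x -> x <= y -> ln x <= ln y.
Proof.
  intros Hx [Hlt | ->].
  - now left; apply ln_increasing.
  - now right.
Qed.

Lemma is_metric_ln_1_plus {T : Type} (f : T -> T -> R) :
  (forall x y, 0 <= f x y) ->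
  (forall x y, f x y = 0 <-> x = y) ->
  (forall x y, f x y = f y x) ->
  (forall x y z, 1 + f x z <= (1 + f x y) * (1 + f y z)) ->
  is_metric (fun x y => ln (1 + f x y)).
Proof.
  intros f_ge0 f_eq0 f_sym f_submult.
  split; [| split; [| split]].
  - intros x y. rewrite <- ln_1. apply ln_le; [lra |].
    pose proof (f_ge0 x y). lra.
  - intros x y. rewrite <- f_eq0. split.
    + intros Hln. rewrite <- ln_1 in Hln.
      apply ln_inv in Hln; [lra | pose proof (f_ge0 x y); lra | lra].
    + intros ->. now rewrite Rplus_0_r, ln_1.
  - intros x y. now rewrite f_sym.
  - intros x y z. pose proof (f_ge0 x y). pose proof (f_ge0 y z).
    rewrite <- ln_mult by lra.
    apply ln_le; [pose proof (f_ge0 x z); lra | apply f_submult].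
Qed.

Lemma sq_sub_le_mul B C v :
  0 < B -> 0 < C -> 0 <= v -> B * B <= C * C + v -> B * B - v <= B * C.
Proof. intros HB HC Hv HBC. destruct (Rle_or_lt B C); nra. Qed.

Lemma ratio_submult A B C u v w :
  0 < A -> 0 < B -> 0 < C -> 0 <= u -> 0 <= v -> w <= u + v ->
  B * B <= A * A + u -> B * B <= C * C + v ->
  1 + 2 * (w / (A * C)) <= (1 + 2 * (u / (A * B))) * (1 + 2 * (v / (B * C))).
Proof.
  intros HA HB HC Hu Hv Hw HBA HBC.
  assert (HAB : B * B - u <= A * B).
  { rewrite (Rmult_comm A B). now apply sq_sub_le_mul. }
  assert (HBC' : B * B - v <= B * C) by now apply sq_sub_le_mul.
  assert (Hnum : w * (B * B) <= u * (B * C) + v * (A * B) + 2 * u * v) by nra.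
  assert (Hdiff : (1 + 2 * (u / (A * B))) * (1 + 2 * (v / (B * C)))
                   - (1 + 2 * (w / (A * C)))
                 = 2 / (A * (B * B) * C)
                   * (u * (B * C) + v * (A * B) + 2 * u * v - w * (B * B))).
  { field. lra. }
  assert (Hcoef : 0 < 2 / (A * (B * B) * C)).
  { apply Rdiv_pos_pos; [lra |]. repeat apply Rmult_lt_0_compat; lra. }
  nra.
Qed.

Lemma sqrt_ratio_submult a b c u v w :
  0 < a -> 0 < b -> 0 < c -> 0 <= u -> 0 <= v -> w <= u + v ->
  b <= a + u -> b <= c + v ->
  1 + 2 * (w / sqrt (a * c))
    <= (1 + 2 * (u / sqrt (a * b))) * (1 + 2 * (v / sqrt (b * c))).
Proof.
  intros Ha Hb Hc Hu Hv Hw Hba Hbc.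
  rewrite !sqrt_mult_alt by lra.
  apply ratio_submult; try apply sqrt_lt_R0; try assumption;
    rewrite !sqrt_sqrt by lra; lra.
Qed.

Section Punctured.

Context {X : Type} {d : X -> X -> R} {p : X}.
Hypothesis d_metric : is_metric d.

Definition rel_dist (x y : punctured X p) : R :=
  d (proj1_sig x) (proj1_sig y)
    / sqrt (d (proj1_sig x) p * d (proj1_sig y) p).

Lemma dist_punctured_gt0 (x : punctured X p) : 0 < d (proj1_sig x) p.
Proof.
  destruct d_metric as [d_ge0 [d_eq0 _]], x as [x Hx]; simpl.
  destruct (d_ge0 x p) as [| Hxp]; [assumption |].
  contradict Hx. apply d_eq0. now symmetry.
Qed.

Lemma sqrt_dist_punctured_gt0 (x y : punctured X p) :
  0 < sqrt (d (proj1_sig x) p * d (proj1_sig y) p).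
Proof.
  apply sqrt_lt_R0, Rmult_lt_0_compat; apply dist_punctured_gt0.
Qed.

Lemma rel_dist_ge0 x y : 0 <= rel_dist x y.
Proof.
  apply Rle_mult_inv_pos; [apply d_metric | apply sqrt_dist_punctured_gt0].
Qed.

Lemma rel_dist_eq0 x y : rel_dist x y = 0 <-> x = y.
Proof.
  destruct d_metric as [_ [d_eq0 _]]. unfold rel_dist. split.
  - intros H0. pose proof (sqrt_dist_punctured_gt0 x y).
    assert (Hd : d (proj1_sig x) (proj1_sig y) = 0).
    { apply (Rmult_eq_reg_r (/ sqrt (d (proj1_sig x) p * d (proj1_sig y) p)));
        [lra | apply Rinv_neq_0_compat; lra]. }
    destruct x, y; apply subset_eq_compat, d_eq0, Hd.
  - intros ->. rewrite (proj2 (d_eq0 _ _) eq_refl). apply Rdiv_0_l.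
Qed.

Lemma rel_dist_sym x y : rel_dist x y = rel_dist y x.
Proof.
  destruct d_metric as [_ [_ [d_sym _]]]. unfold rel_dist.
  now rewrite d_sym, Rmult_comm.
Qed.

Lemma rel_dist_submult x y z :
  1 + 2 * rel_dist x z <= (1 + 2 * rel_dist x y) * (1 + 2 * rel_dist y z).
Proof.
  destruct d_metric as [d_ge0 [_ [d_sym d_tri]]].
  pose proof (dist_punctured_gt0 x). pose proof (dist_punctured_gt0 y).
  pose proof (dist_punctured_gt0 z).
  unfold rel_dist.
  apply sqrt_ratio_submult; try assumption; try apply d_ge0.
  - apply d_tri.
  - rewrite Rplus_comm, (d_sym (proj1_sig x)). apply d_tri.
  - rewrite Rplus_comm. apply d_tri.
Qed.

End Punctured.

Arguments rel_dist {X} d p x y.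

Theorem theorem2p1 (X : Type) (d : X -> X -> R) (p : X) :
  is_metric d -> is_metric (tau d p).
Proof.
  intros d_metric.
  apply (is_metric_ln_1_plus (fun x y => 2 * rel_dist d p x y)).
  - intros x y. pose proof (rel_dist_ge0 d_metric x y). lra.
  - intros x y. rewrite <- (rel_dist_eq0 d_metric x y). lra.
  - intros x y. now rewrite (rel_dist_sym d_metric x y).
  - exact (rel_dist_submult d_metric).
Qed.
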